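(* Let $\phi\colon H\to\mathrm{Out}(A_\Gamma)$ be a homomorphism and let $\Delta,\Sigma\in\mathcal L^\phi$. Then (i) $\Delta\cap\Sigma\in\mathcal L^\phi$; and (ii) if $\mathrm{lk}(\Delta\cap\Sigma)\subseteq\mathrm{st}(\Delta)$, then $\Delta\cup\Sigma\in\mathcal L^\phi$.
   Context: $\Gamma$ is a finite simplicial graph, $A_\Gamma$ its RAAG. Induced subgraphs are identified with their vertex sets, and $\cap,\cup$ of induced subgraphs means the induced subgraph on the intersection/union of vertex sets. For an induced subgraph $\Delta$, $A_\Delta$ is the subgroup generated by its vertices, $\mathrm{lk}(\Delta)=\bigcap_{v\in\Delta}\mathrm{lk}(v)$ (the vertices adjacent to all vertices of $\Delta$; $\mathrm{lk}(\emptyset)=\Gamma$) and $\mathrm{st}(\Delta)=\Delta\cup\mathrm{lk}(\Delta)$. The system of invariant subgraphs $\mathcal L^\phi$ is the set of induced subgraphs $\Delta\subseteq\Gamma$ (including the empty one) such that every element of $\phi(H)$ maps $A_\Delta$ to a conjugate of $A_\Delta$ (i.e. $\phi(H)$ preserves the conjugacy class of $A_\Delta$). *)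

(* Concrete model of a right-angled Artin group A_Gamma:
   elements are words in the letters v^{+1}, v^{-1} (v a vertex), modulo the
   congruence generated by free cancellation and commutation of letters whose
   underlying vertices are adjacent. *)
From mathcomp Require Import all_boot.
Set Implicit Arguments. Unset Strict Implicit. Unset Printing Implicit Defensive.

Section RAAG.
Variable V : finType.
Variable adj : rel V.   (* edge relation of Gamma (assumed symmetric, irreflexive) *)

(* a letter (v, false) is the generator v, (v, true) is v^-1 *)
Definition letter := (V * bool)%type.
Definition word := seq letter.
Definition inv_letter (x : letter) : letter := (x.1, ~~ x.2).
Definition winv (w : word) : word := rev (map inv_letter w).
Definition gen (v : V) : word := [:: (v, false)].

Inductive weq : word -> word -> Prop :=
| weq_refl w : weq w w
| weq_sym w1 w2 : weq w1 w2 -> weq w2 w1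
| weq_trans w1 w2 w3 : weq w1 w2 -> weq w2 w3 -> weq w1 w3
| weq_cancel (u v : word) (x : letter) :
    weq (u ++ x :: inv_letter x :: v) (u ++ v)
| weq_comm (u v : word) (x y : letter) :
    adj x.1 y.1 -> weq (u ++ x :: y :: v) (u ++ y :: x :: v).

Definition ext (g : V -> word) (w : word) : word :=
  flatten (map (fun x => if x.2 then winv (g x.1) else g x.1) w).

Definition is_endo (g : V -> word) : Prop :=
  forall u v, adj u v -> weq (g u ++ g v) (g v ++ g u).

Definition is_auto (g : V -> word) : Prop :=
  is_endo g /\ exists h, is_endo h /\
    forall v, weq (ext g (h v)) (gen v) /\ weq (ext h (g v)) (gen v).

Definition comp (g1 g2 : V -> word) : V -> word := fun v => ext g1 (g2 v).

Definition out_eq (g1 g2 : V -> word) : Prop :=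
  exists c : word, forall v, weq (g1 v) (winv c ++ g2 v ++ c).

Definition in_special (D : {set V}) (w : word) : Prop :=
  exists w', weq w w' /\ all (fun x : letter => x.1 \in D) w'.

Definition conjw (c w : word) : word := winv c ++ w ++ c.

Definition maps_to_conj (g : V -> word) (D : {set V}) : Prop :=
  exists c : word,
    (forall w, in_special D w -> in_special D (conjw c (ext g w))) /\
    (forall u, in_special D u -> exists w, in_special D w /\ weq (conjw c (ext g w)) u).

Definition lk (D : {set V}) : {set V} := [set v | [forall u in D, adj u v]].
Definition st (D : {set V}) : {set V} := D :|: lk D.

(* a homomorphism phi : H -> Out(A_Gamma), each phi h given by a representative
   automorphism of A_Gamma *)
Definition is_group (H : Type) (mul : H -> H -> H) (one : H) (inv : H -> H) : Prop :=
  (forall a b c, mul a (mul b c) = mul (mul a b) c) /\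
  (forall a, mul one a = a /\ mul a one = a) /\
  (forall a, mul (inv a) a = one /\ mul a (inv a) = one).

Definition is_out_hom (H : Type) (mul : H -> H -> H) (phi : H -> V -> word) : Prop :=
  (forall h, is_auto (phi h)) /\
  (forall h1 h2, out_eq (phi (mul h1 h2)) (comp (phi h1) (phi h2))).

Definition invariant_sub (H : Type) (phi : H -> V -> word) (D : {set V}) : Prop :=
  forall h, maps_to_conj (phi h) D.

End RAAG.

(* The retraction of A_Gamma onto a special subgroup A_X (delete
   the letters outside X) shows that an element of A_Gamma lies in A_X iff it
   is fixed by the retraction; so if c^-1 g(A_D) c <= A_D and
   d^-1 g(A_S) d <= A_S, then conjugating by c rho_D(c^-1 d) sends g(A_{D n S})
   into A_D n A_S = A_{D n S}.  For the union, two such conjugators for D and S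
   differ on A_{D n S} by an element n centralising A_{D n S}; the centraliser
   of a special subgroup A_P lies in A_{st P} (via a Britton-type normal form
   for the splitting of A_Gamma as an HNN extension over each vertex u), and
   lk(D n S) <= st D lets n be absorbed into a conjugator for A_D that also
   works for A_S.  Finally, for an automorphism, "into a conjugate" for g and
   for g^-1 upgrades to "onto a conjugate". *)
From Stdlib Require Import Setoid Morphisms ZArith Lia.
From Stdlib Require Import ClassicalEpsilon PropExtensionality FunctionalExtensionality Classical.
From Pilot Require Import Defs.
From mathcomp Require Import all_boot.
Set Implicit Arguments. Unset Strict Implicit. Unset Printing Implicit Defensive.

Section RAAG.
Variables (V : finType) (adj : rel V).
Hypothesis adj_sym : symmetric adj.
Hypothesis adj_irr : irreflexive adj.

Local Notation weq := (weq adj).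
Local Notation word := (word V).
Local Notation in_special := (in_special adj).
Local Notation lk := (lk adj).
Local Notation st := (st adj).

Global Instance weq_equiv : Equivalence weq.
Proof. by split; [exact: weq_refl | exact: weq_sym | exact: weq_trans]. Qed.

Local Hint Extern 0 (Defs.weq _ _ _) => reflexivity : core.

Lemma weq_catl (a b b' : word) : weq b b' -> weq (a ++ b) (a ++ b').
Proof.
elim=> {b b'} [w|? ? _ H|? ? ? _ H1 _ H2|u v x|u v x y H].
- by [].
- by symmetry.
- by etransitivity; eauto.
- by rewrite !catA; apply: weq_cancel.
- by rewrite !catA; apply: weq_comm.
Qed.

Lemma weq_catr (a a' b : word) : weq a a' -> weq (a ++ b) (a' ++ b).
Proof.
elim=> {a a'} [w|? ? _ H|? ? ? _ H1 _ H2|u v x|u v x y H].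
- by [].
- by symmetry.
- by etransitivity; eauto.
- by rewrite -!catA !cat_cons; apply: weq_cancel.
- by rewrite -!catA !cat_cons; apply: weq_comm.
Qed.

Global Instance cat_proper : Proper (weq ==> weq ==> weq) (@cat (letter V)).
Proof.
by move=> a a' Ha b b' Hb; transitivity (a ++ b'); [exact: weq_catl | exact: weq_catr].
Qed.

Global Instance cons_proper x : Proper (weq ==> weq) (cons x).
Proof. by move=> a b H; rewrite -(cat1s x a) -(cat1s x b); apply: weq_catl. Qed.

Lemma inv_letterK : involutive (@inv_letter V).
Proof. by case=> v b; rewrite /inv_letter /= negbK. Qed.

Lemma winv_cat (a b : word) : winv (a ++ b) = winv b ++ winv a.
Proof. by rewrite /winv map_cat rev_cat. Qed.

Lemma winv_cons x (a : word) : winv (x :: a) = winv a ++ [:: inv_letter x].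
Proof. by rewrite -cat1s winv_cat. Qed.

Lemma winvK : involutive (@winv V).
Proof.
by move=> a; rewrite /winv map_rev revK -map_comp map_id_in // => x _ /=; rewrite inv_letterK.
Qed.

Global Instance winv_proper : Proper (weq ==> weq) (@winv V).
Proof.
move=> a b; elim=> {a b} [w|? ? _ H|? ? ? _ H1 _ H2|u v x|u v x y H].
- by [].
- by symmetry.
- by etransitivity; eauto.
- by rewrite !winv_cat !winv_cons -!catA /= inv_letterK; apply: weq_cancel.
- rewrite !winv_cat !winv_cons -!catA /=.
  by apply: weq_comm; rewrite /inv_letter /= adj_sym.
Qed.

Lemma weq_catwV (a : word) : weq (a ++ winv a) [::].
Proof.
elim: a => [|x a IH] //=; rewrite winv_cons /= catA IH /=.
exact: (weq_cancel adj [::] [::] x).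
Qed.

Lemma weq_catVw (a : word) : weq (winv a ++ a) [::].
Proof. by rewrite -{2}(winvK a); apply: weq_catwV. Qed.

Lemma weq_catK (a b : word) : weq (a ++ b ++ winv b) a.
Proof. by rewrite weq_catwV cats0. Qed.

Lemma weq_Kcat (a b : word) : weq (winv b ++ b ++ a) a.
Proof. by rewrite catA weq_catVw. Qed.

Lemma weq_KVcat (a b : word) : weq (b ++ winv b ++ a) a.
Proof. by rewrite catA weq_catwV. Qed.

Ltac group_simpl :=
  rewrite ?winv_cat ?winvK -?catA;
  repeat rewrite ?weq_Kcat ?weq_KVcat ?weq_catVw ?weq_catwV ?cats0 -?catA.

Lemma weq_comm_inv (a b : word) :
  weq (a ++ b) (b ++ a) -> weq (winv a ++ b) (b ++ winv a).
Proof.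
move=> H; transitivity (winv a ++ (b ++ a) ++ winv a); first by group_simpl.
by rewrite -H; group_simpl.
Qed.

Lemma weq_comm_words (a b : word) :
  (forall x y, x \in a -> y \in b -> adj x.1 y.1) -> weq (a ++ b) (b ++ a).
Proof.
elim: a => [|x a IH] Hab /=; first by rewrite cats0.
have Hx y : y \in b -> adj x.1 y.1 by move=> Hy; apply: Hab; rewrite ?inE ?eqxx.
have x_b : weq (x :: b) (b ++ [:: x]).
  elim: b Hx {Hab IH} => [|y b IHb] Hx //=.
  transitivity (y :: x :: b).
    by apply: (@weq_comm V adj [::] b x y); apply: Hx; rewrite inE eqxx.
  by apply: cons_proper; apply: IHb => z Hz; apply: Hx; rewrite inE Hz orbT.
rewrite IH; last by move=> x' y Hx' Hy; apply: Hab; rewrite ?inE ?Hx' ?orbT.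
by rewrite -cat_cons x_b -catA.
Qed.

(** * Special subgroups and their retractions *)

Definition retract (X : {set V}) (w : word) : word := [seq x <- w | x.1 \in X].

Lemma retract_cat (X : {set V}) (a b : word) : retract X (a ++ b) = retract X a ++ retract X b.
Proof. exact: filter_cat. Qed.

Lemma retract_winv (X : {set V}) (a : word) : retract X (winv a) = winv (retract X a).
Proof. by rewrite /retract /winv filter_rev filter_map. Qed.

Global Instance retract_proper (X : {set V}) : Proper (weq ==> weq) (retract X).
Proof.
move=> a b; elim=> {a b} [w|? ? _ H|? ? ? _ H1 _ H2|u v x|u v x y H].
- by [].
- by symmetry.
- by etransitivity; eauto.
- by rewrite !retract_cat /=; case: (x.1 \in X) => //; apply: weq_cancel.
- rewrite !retract_cat /=.
  by case: (x.1 \in X); case: (y.1 \in X) => //; apply: weq_comm.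
Qed.

Lemma retractI (X Y : {set V}) (w : word) :
  retract X (retract Y w) = retract (X :&: Y) w.
Proof. by rewrite /retract -filter_predI; apply: eq_filter => x /=; rewrite in_setI. Qed.

Lemma all_retract (X : {set V}) (w : word) : all (fun x : letter V => x.1 \in X) (retract X w).
Proof. by apply/allP => x; rewrite mem_filter => /andP[]. Qed.

Lemma in_specialE (X : {set V}) (w : word) : in_special X w <-> weq w (retract X w).
Proof.
split=> [[w' [-> Hw']]|Hw]; last by exists (retract X w); split; last exact: all_retract.
by rewrite /retract (all_filterP Hw').
Qed.

Global Instance in_special_proper (X : {set V}) : Proper (weq ==> iff) (in_special X).
Proof. by move=> a b Hab; rewrite !in_specialE Hab. Qed.

Lemma in_special_retract (X : {set V}) (w : word) : in_special X (retract X w).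
Proof. by rewrite in_specialE /retract filter_id. Qed.

Lemma in_special_nil (X : {set V}) : in_special X [::].
Proof. by rewrite in_specialE. Qed.

Lemma in_special_cat (X : {set V}) (a b : word) :
  in_special X a -> in_special X b -> in_special X (a ++ b).
Proof. by rewrite !in_specialE retract_cat => {1}-> {1}->. Qed.

Lemma in_special_winv (X : {set V}) (a : word) : in_special X a -> in_special X (winv a).
Proof. by rewrite !in_specialE retract_winv => {1}->. Qed.

Lemma in_special_conj (X : {set V}) (a b : word) :
  in_special X a -> in_special X b -> in_special X (winv a ++ b ++ a).
Proof. by move=> Ha Hb; do !apply: in_special_cat => //; apply: in_special_winv. Qed.

Lemma in_special_letter (X : {set V}) (x : letter V) : x.1 \in X -> in_special X [:: x].
Proof. by move=> Hx; exists [:: x]; rewrite /= Hx. Qed.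

Lemma in_special_sub (X Y : {set V}) (w : word) :
  X \subset Y -> in_special X w -> in_special Y w.
Proof.
move=> sXY [w' [Hw Hall]]; exists w'; split => //.
by apply/allP => x /(allP Hall); apply: (subsetP sXY).
Qed.

Lemma in_specialI (X Y : {set V}) (w : word) :
  in_special X w -> in_special Y w -> in_special (X :&: Y) w.
Proof. by rewrite !in_specialE -retractI => HX HY; rewrite {1}HX {1}HY. Qed.

Lemma retract_conj (X : {set V}) (a b : word) : in_special X b ->
  weq (retract X (a ++ b ++ winv a)) (retract X a ++ b ++ winv (retract X a)).
Proof. by rewrite in_specialE => Hb; rewrite !retract_cat retract_winv -Hb. Qed.

Lemma in_special_link_comm (D : {set V}) (a b : word) :
  in_special D a -> in_special (lk D) b -> weq (a ++ b) (b ++ a).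
Proof.
rewrite !in_specialE => -> ->.
apply: weq_comm_words => x y; rewrite !mem_filter => /andP[Hx _] /andP[Hy _].
by move: Hy; rewrite inE => /forallP/(_ x.1); rewrite Hx.
Qed.

Lemma star_decomp (D : {set V}) (n : word) :
  in_special (st D) n -> weq n (retract D n ++ retract (lk D) n).
Proof.
rewrite in_specialE => ->; rewrite !retractI.
rewrite (setIidPl (subsetUl D (lk D))) (setIidPl (subsetUr D (lk D))).
elim: n => [|x n IH] //=; rewrite in_setU.
case HD: (x.1 \in D) => /=.
  have -> : (x.1 \in lk D) = false.
    by apply/negP; rewrite inE => /forallP/(_ x.1); rewrite HD adj_irr.
  by rewrite IH.
case HL: (x.1 \in lk D) => //=.
rewrite IH -cat_cons -[x :: retract D n]cat1s -[x :: retract _ n]cat1s catA.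
apply: weq_catr; apply: weq_comm_words => x' y; rewrite inE => /eqP -> Hy.
by move: HL; rewrite inE => /forallP/(_ y.1); rewrite (allP (all_retract D n) _ Hy) adj_sym.
Qed.

Definition expsum (p : V) (w : word) : Z :=
  foldr (fun x z => if x.1 == p then (if x.2 then z - 1 else z + 1)%Z else z) 0%Z w.

Lemma expsum_cat p (a b : word) : expsum p (a ++ b) = (expsum p a + expsum p b)%Z.
Proof.
elim: a => [|[v b'] a IH] //=; rewrite IH.
by case: (v == p); case: b' => /=; lia.
Qed.

Lemma expsum_weq p (a b : word) : weq a b -> expsum p a = expsum p b.
Proof.
elim=> {a b} // [? ? ? _ -> _ -> //|u v [v' b]|u v [x1 x2] [y1 y2] _]; rewrite !expsum_cat /=.
- by case: (v' == p); case: b => /=; lia.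
- by case: (x1 == p); case: (y1 == p); case: x2; case: y2; lia.
Qed.

Lemma expsum_special p (X : {set V}) (a : word) :
  p \notin X -> in_special X a -> expsum p a = 0%Z.
Proof.
move=> pX [w [Hw Hall]]; rewrite (expsum_weq p Hw).
elim: w Hall {Hw} => [|x w IH] //= /andP[Hx /IH ->].
by case: eqP => // Ex; rewrite -Ex Hx in pX.
Qed.

(** * The centraliser of a generator *)

Section Britton.
Variable u : V.

Definition link_u : {set V} := [set v | adj u v].
Definition del_u : {set V} := [set v | v != u].

Lemma link_u_sub : link_u \subset del_u.
Proof. by apply/subsetP => v; rewrite !inE; apply: contraTneq => ->; rewrite adj_irr. Qed.

(* Chosen representatives of weq-classes and of the cosets w A_{lk u}, so that
   normal forms can be compared with Leibniz equality. *)
Definition canon (w : word) : word := epsilon (inhabits [::]) (weq w).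

Lemma canon_weq w : weq (canon w) w.
Proof. by symmetry; apply: (epsilon_spec (inhabits [::]) (weq w)); exists w. Qed.

Lemma canon_eq w1 w2 : weq w1 w2 -> canon w1 = canon w2.
Proof.
move=> H; rewrite /canon; congr epsilon; apply: functional_extensionality => w'.
by apply: propositional_extensionality; rewrite H.
Qed.

Lemma canonK w : canon (canon w) = canon w.
Proof. exact: canon_eq (canon_weq w). Qed.

Definition is_coset_rep (w t : word) : Prop :=
  (exists l, in_special link_u l /\ weq w (t ++ l)) /\
  (in_special link_u w -> t = [::]).

Definition coset_rep (w : word) : word := epsilon (inhabits [::]) (is_coset_rep w).

Lemma coset_rep_spec w : is_coset_rep w (coset_rep w).
Proof.
apply: (epsilon_spec (inhabits [::]) (is_coset_rep w)).
have [Lw|Lw] := classic (in_special link_u w).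
  by exists [::]; split => //; exists w.
by exists w; split => //; exists [::]; rewrite cats0; split => //; apply: in_special_nil.
Qed.

Lemma coset_repP w : exists2 l, in_special link_u l & weq w (coset_rep w ++ l).
Proof. by have [[l [? ?]] _] := coset_rep_spec w; exists l. Qed.

Lemma coset_rep_special w : in_special link_u w -> coset_rep w = [::].
Proof. by case: (coset_rep_spec w). Qed.

Lemma coset_rep_eq0 w : coset_rep w = [::] -> in_special link_u w.
Proof. by move=> E; have [l Hl Hw] := coset_repP w; rewrite Hw E. Qed.

Lemma coset_rep_mulr w w' l :
  in_special link_u l -> weq w' (w ++ l) -> coset_rep w' = coset_rep w.
Proof.
move=> Hl Hw; rewrite /coset_rep; congr epsilon.
apply: functional_extensionality => t; apply: propositional_extensionality.
have Hw_l : weq w (w' ++ winv l) by rewrite Hw -catA weq_catwV cats0.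
have Ll : in_special link_u (winv l) by apply: in_special_winv.
have HLw : in_special link_u w' <-> in_special link_u w.
  by split=> ?; [rewrite Hw_l | rewrite Hw]; apply: in_special_cat.
rewrite /is_coset_rep HLw.
split=> [] [[l0 [Hl0 H0]] H1]; split => //.
- exists (l0 ++ winv l); split; first exact: in_special_cat.
  by rewrite catA -H0 Hw_l.
- exists (l0 ++ l); split; first exact: in_special_cat.
  by rewrite Hw H0 catA.
Qed.

Lemma coset_rep_weq w w' : weq w' w -> coset_rep w' = coset_rep w.
Proof. by move=> H; apply: (coset_rep_mulr (in_special_nil _)); rewrite cats0. Qed.

Lemma coset_repK w : coset_rep (coset_rep w) = coset_rep w.
Proof.
have [l Hl Hw] := coset_repP w; apply: (coset_rep_mulr (in_special_winv Hl)).
transitivity ((coset_rep w ++ l) ++ winv l); first by rewrite -catA weq_catK.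
by apply: weq_catr; symmetry.
Qed.

Lemma coset_rep_nil : coset_rep [::] = [::].
Proof. exact/coset_rep_special/in_special_nil. Qed.

Lemma coset_rep_special_mull l t : in_special link_u l ->
  coset_rep t = t -> t <> [::] -> coset_rep (l ++ t) <> [::].
Proof.
move=> Hl Ht Hn /coset_rep_eq0 Llt; apply: Hn; rewrite -Ht; apply: coset_rep_special.
have -> : weq t (winv l ++ (l ++ t)) by rewrite catA weq_catVw.
by apply: in_special_cat => //; apply: in_special_winv.
Qed.

Lemma coset_rep_quotient h t : in_special link_u (winv (coset_rep (h ++ t)) ++ h ++ t).
Proof. by have [l Hl Hw] := coset_repP (h ++ t); rewrite {2}Hw weq_Kcat. Qed.

Definition sgn (b : bool) : Z := if b then (-1)%Z else 1%Z.

Definition upow (k : Z) : word :=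
  match k with
  | Z0 => [::]
  | Zpos p => nseq (Pos.to_nat p) (u, false)
  | Zneg p => nseq (Pos.to_nat p) (u, true)
  end.

Lemma link_comm_upow l k : in_special link_u l -> weq (l ++ upow k) (upow k ++ l).
Proof.
move=> Hl; suff H n b : weq (l ++ nseq n (u, b)) (nseq n (u, b) ++ l).
  by case: k => [|p|p] /=; rewrite ?cats0 ?H.
move: Hl; rewrite in_specialE => ->; apply: weq_comm_words => x y Hx.
rewrite mem_nseq => /andP[_ /eqP ->] /=; rewrite adj_sym.
by move: Hx; rewrite mem_filter inE => /andP[].
Qed.

Lemma upow_nat n : upow (Z.of_nat n) = nseq n (u, false).
Proof. by case: n => //= n; rewrite SuccNat2Pos.id_succ. Qed.

Lemma upow_oppnat n : upow (- Z.of_nat n) = nseq n (u, true).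
Proof. by case: n => //= n; rewrite SuccNat2Pos.id_succ. Qed.

Lemma upow_sgn b k : weq (upow (k + sgn b)) ((u, b) :: upow k).
Proof.
have [n [->|->]] : exists n, k = Z.of_nat n \/ k = (- Z.of_nat n)%Z.
  by exists (Z.to_nat (Z.abs k)); lia.
- case: b => /=; last first.
    have -> : (Z.of_nat n + 1 = Z.of_nat n.+1)%Z by lia.
    by rewrite !upow_nat.
  case: n => [|n] //; have -> : (Z.of_nat n.+1 + -1 = Z.of_nat n)%Z by lia.
  by rewrite !upow_nat; symmetry; apply: (weq_cancel adj [::] _ (u, true)).
- case: b => /=.
    have -> : (- Z.of_nat n + -1 = - Z.of_nat n.+1)%Z by lia.
    by rewrite !upow_oppnat.
  case: n => [|n] //; have -> : (- Z.of_nat n.+1 + 1 = - Z.of_nat n)%Z by lia.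
  by rewrite !upow_oppnat; symmetry; apply: (weq_cancel adj [::] _ (u, false)).
Qed.

(* A normal form ([:: (t_1, k_1); ...; (t_n, k_n)], g) stands for the word
   t_1 u^k_1 ... t_n u^k_n g: the t_i are the chosen coset representatives
   of A_{Gamma-u} / A_{lk u}, g lies in A_{Gamma-u}, the k_i are nonzero and
   t_i <> 1 for i > 1.  This is Britton's normal form for A_Gamma viewed as
   the HNN extension of A_{Gamma-u} along A_{lk u} with stable letter u;
   act_base h and act_stable b compute the normal forms of h s and u^(+-1) s. *)
Definition nform := (seq (word * Z) * word)%type.

Definition eval_nform (s : nform) : word :=
  flatten [seq tk.1 ++ upow tk.2 | tk <- s.1] ++ s.2.

Fixpoint reduced_tail (ss : seq (word * Z)) : Prop :=
  if ss is tk :: r then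
    (coset_rep tk.1 = tk.1 /\ tk.2 <> 0%Z /\ tk.1 <> [::]) /\ reduced_tail r
  else True.

Definition reduced (s : nform) : Prop :=
  [/\ canon s.2 = s.2, in_special del_u s.2 &
   if s.1 is tk :: rest then [/\ coset_rep tk.1 = tk.1, tk.2 <> 0%Z & reduced_tail rest]
   else True].

Fixpoint all_reps (ss : seq (word * Z)) : Prop :=
  if ss is tk :: r then coset_rep tk.1 = tk.1 /\ all_reps r else True.

Lemma reduced_all_reps s : reduced s -> all_reps s.1 /\ canon s.2 = s.2.
Proof.
have tail_reps ss : reduced_tail ss -> all_reps ss.
  by elim: ss => [|tk ss IH] //= [[? _] /IH].
by case: s => [[|tk ss] g] [Hc _ H] //=; case: H => H1 _ /tail_reps.
Qed.

Fixpoint act_base (h : word) (ss : seq (word * Z)) (g : word) : nform :=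
  if ss is tk :: rest then
    let t' := coset_rep (h ++ tk.1) in
    let r := act_base (winv t' ++ h ++ tk.1) rest g in
    ((t', tk.2) :: r.1, r.2)
  else ([::], canon (h ++ g)).

Definition act_stable (b : bool) (s : nform) : nform :=
  if s.1 is tk :: rest then
    if tk.1 == [::] then
      (if (tk.2 + sgn b =? 0)%Z then (rest, s.2)
       else (([::], (tk.2 + sgn b)%Z) :: rest, s.2))
    else (([::], sgn b) :: tk :: rest, s.2)
  else ([:: ([::], sgn b)], s.2).

Definition act (x : letter V) (s : nform) : nform :=
  if x.1 == u then act_stable x.2 s else act_base [:: x] s.1 s.2.

Definition act_word (w : word) (s : nform) : nform := foldr act s w.

Lemma act_base_weq h h' ss g : weq h h' -> act_base h ss g = act_base h' ss g.
Proof.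
elim: ss h h' => [|[t k] ss IH] h h' H /=; first by rewrite (canon_eq (weq_catr g H)).
have E : coset_rep (h ++ t) = coset_rep (h' ++ t) by apply/coset_rep_weq/weq_catr.
by rewrite E (IH _ (winv (coset_rep (h' ++ t)) ++ h' ++ t)) // H.
Qed.

Lemma act_base_mul h1 h2 ss g :
  act_base h1 (act_base h2 ss g).1 (act_base h2 ss g).2 = act_base (h1 ++ h2) ss g.
Proof.
elim: ss h1 h2 => [|[t k] ss IH] h1 h2 /=.
  by congr (_, _); apply: canon_eq; rewrite canon_weq catA.
have E : coset_rep (h1 ++ coset_rep (h2 ++ t)) = coset_rep ((h1 ++ h2) ++ t).
  have [l Hl Hw] := coset_repP (h2 ++ t).
  by symmetry; apply: (coset_rep_mulr Hl); rewrite -!catA; apply: weq_catl.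
rewrite IH E (@act_base_weq _ (winv (coset_rep ((h1 ++ h2) ++ t)) ++ (h1 ++ h2) ++ t)) //.
by rewrite -!catA weq_KVcat.
Qed.

Lemma act_base_id h ss g :
  all_reps ss -> canon g = g -> weq h [::] -> act_base h ss g = (ss, g).
Proof.
elim: ss h => [|[t k] ss IH] h /=.
  by move=> _ Hg Hh; rewrite (canon_eq (weq_catr g Hh)) /= Hg.
move=> [Ht Hss] Hg Hh.
have E : coset_rep (h ++ t) = t by rewrite -{2}Ht; apply: coset_rep_weq; rewrite Hh.
by rewrite E IH // Hh weq_catVw.
Qed.

Lemma act_base_tail_reduced l ss g : in_special link_u l ->
  reduced_tail ss -> reduced_tail (act_base l ss g).1.
Proof.
elim: ss l => [|[t k] ss IH] l Hl //= [[Ht [Hk Hn]] Hss].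
split; last by apply: IH => //; apply: coset_rep_quotient.
by split; [apply: coset_repK | split=> //; apply: coset_rep_special_mull].
Qed.

Lemma act_base_reduced h s : in_special del_u h -> reduced s -> reduced (act_base h s.1 s.2).
Proof.
case: s => ss g Hh [/= Hc HG H].
have base_part h' : in_special del_u h' ->
    in_special del_u (act_base h' ss g).2 /\ canon (act_base h' ss g).2 = (act_base h' ss g).2.
  elim: ss {H} h' => [|[t k] ss IH] h' Hh' /=.
    by split; [rewrite canon_weq; apply: in_special_cat | apply: canonK].
  by apply: IH; apply: (in_special_sub link_u_sub); apply: coset_rep_quotient.
have [HG' Hc'] := base_part h Hh; split => //.
case: ss H {base_part HG' Hc'} => [|[t k] ss] //= [Ht Hk Hss].
split => //; first exact: coset_repK.
by apply: act_base_tail_reduced => //; apply: coset_rep_quotient.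
Qed.

Lemma sgn_neq0 b : sgn b <> 0%Z.
Proof. by case: b. Qed.

Lemma act_stable_reduced b s : reduced s -> reduced (act_stable b s).
Proof.
case: s => [[|[t k] ss] g] [/= Hc HG H]; rewrite /act_stable /=.
  by split=> //; split; [apply: coset_rep_nil | apply: sgn_neq0 |].
case: H => /= Ht Hk Hss; case: eqP => Et /=; last first.
  by split=> //; split; [apply: coset_rep_nil | apply: sgn_neq0 | split].
case: Z.eqb_spec => Ek; split=> //; last by split=> //; apply: coset_rep_nil.
by case: ss Hss => [|[t2 k2] ss] //= [[? [? ?]] ?].
Qed.

Lemma act_stableK b s : reduced s -> act_stable b (act_stable (~~ b) s) = s.
Proof.
have Hd : (sgn (~~ b) + sgn b = 0)%Z by case: b.
case: s => [[|[t k] ss] g] [/= Hc HG H]; rewrite /act_stable /=; first by rewrite Hd.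
case: H => /= Ht Hk Hss; case: eqP => Et /=; last first.
  by case: Z.eqb_spec => E2 //; lia.
subst t; case: Z.eqb_spec => Ek /=.
  case: ss Hss => [|[t2 k2] ss] /=; first by move=> _; do 3 f_equal; lia.
  by case=> [[_ [_ Hn]] _]; case: eqP => // _; do 3 f_equal; lia.
by case: Z.eqb_spec => E2; [lia | do 3 f_equal; lia].
Qed.

Lemma act_stable_base_comm b l s : in_special link_u l -> reduced s ->
  act_stable b (act_base l s.1 s.2) = act_base l (act_stable b s).1 (act_stable b s).2.
Proof.
move=> Hl.
have E0 : coset_rep (l ++ [::]) = [::] by rewrite cats0; apply: coset_rep_special.
have E1 ss g : act_base (winv [::] ++ l ++ [::]) ss g = act_base l ss g.
  by apply: act_base_weq; rewrite /= cats0.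
case: s => [[|[t k] ss] g] [/= Hc HG H]; rewrite /act_stable /=.
  by rewrite E0; congr (_, _); apply: canon_eq; rewrite /= cats0.
case: H => /= Ht Hk Hss; have [->|Et] := eqVneq t [::].
  rewrite E0 eqxx /= E1; case: Z.eqb_spec => Ek /=; first by case: (act_base l ss g).
  by rewrite E0 E1.
have Hn : coset_rep (l ++ t) != [::].
  by apply/eqP; apply: coset_rep_special_mull => //; apply/eqP.
by rewrite (negbTE Hn) /= E0 /= cats0.
Qed.

Lemma act_reduced x s : reduced s -> reduced (act x s).
Proof.
rewrite /act; case: eqP => Hx Hs; first exact: act_stable_reduced.
by apply: act_base_reduced => //; apply: in_special_letter; rewrite inE; apply/eqP.
Qed.

Lemma act_word_reduced w s : reduced s -> reduced (act_word w s).
Proof. by elim: w => [|x w IH] //= Hs; apply/act_reduced/IH. Qed.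

Lemma act_word_cat a b s : act_word (a ++ b) s = act_word a (act_word b s).
Proof. exact: foldr_cat. Qed.

Lemma actK x s : reduced s -> act x (act (inv_letter x) s) = s.
Proof.
case: x => v b Hs; rewrite /act /=; case: eqP => _; first exact: act_stableK.
have [H1 H2] := reduced_all_reps Hs.
rewrite act_base_mul act_base_id //; first by case: s {Hs H1 H2}.
exact: (weq_cancel adj [::] [::] (v, b)).
Qed.

Lemma act_comm x y s : adj x.1 y.1 -> reduced s -> act x (act y s) = act y (act x s).
Proof.
move=> Hxy Hs; rewrite /act; case: eqP => Hx; case: eqP => Hy.
- by move: Hxy; rewrite Hx Hy adj_irr.
- by apply: act_stable_base_comm => //; apply: in_special_letter; rewrite inE -Hx.
- by symmetry; apply: act_stable_base_comm => //; apply: in_special_letter; rewrite inE -Hy adj_sym.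
- by rewrite !act_base_mul; apply: act_base_weq; exact: (@weq_comm V adj [::] [::] x y Hxy).
Qed.

Lemma act_word_weq w1 w2 : weq w1 w2 -> forall s, reduced s -> act_word w1 s = act_word w2 s.
Proof.
elim=> {w1 w2} [//|? ? _ H s Hs|? ? ? _ H1 _ H2 s Hs|a b x s Hs|a b x y Hxy s Hs].
- by symmetry; apply: H.
- by rewrite H1 // H2.
- by rewrite !act_word_cat /=; congr act_word; apply/actK/act_word_reduced.
- by rewrite !act_word_cat /=; congr act_word; apply/act_comm/act_word_reduced.
Qed.

Lemma eval_act_base h ss g : weq (eval_nform (act_base h ss g)) (h ++ eval_nform (ss, g)).
Proof.
elim: ss h => [|[t k] ss IH] h; first by rewrite /eval_nform /= canon_weq.
have eval_cons t0 k0 ss0 g0 :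
    eval_nform ((t0, k0) :: ss0, g0) = t0 ++ upow k0 ++ eval_nform (ss0, g0).
  by rewrite /eval_nform /= -!catA.
set t' := coset_rep (h ++ t).
have -> : eval_nform (act_base h ((t, k) :: ss) g) =
    t' ++ upow k ++ eval_nform (act_base (winv t' ++ h ++ t) ss g).
  by rewrite /= eval_cons; case: (act_base _ ss g).
rewrite IH eval_cons [upow k ++ _]catA.
by rewrite -(link_comm_upow _ (coset_rep_quotient h t)) -!catA weq_KVcat.
Qed.



Lemma eval_act_stable b s : weq (eval_nform (act_stable b s)) ((u, b) :: eval_nform s).
Proof.
case: s => [[|[t k] ss] g]; rewrite /act_stable /eval_nform /=.
  by rewrite cats0; case: b.
case: eqP => [->|_] /=; last by rewrite -!catA; case: b.
case: Z.eqb_spec => [Ek|_] /=; last by rewrite -!catA upow_sgn.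
by rewrite /= -catA -cat_cons -(upow_sgn b k) Ek.
Qed.

Lemma eval_act x s : weq (eval_nform (act x s)) (x :: eval_nform s).
Proof.
rewrite /act; case: eqP => [Hx|_]; last by rewrite eval_act_base; case: s.
by rewrite eval_act_stable; case: x Hx => v b /= ->.
Qed.

Lemma eval_act_word w s : weq (eval_nform (act_word w s)) (w ++ eval_nform s).
Proof. by elim: w => [|x w IH] //=; rewrite eval_act IH. Qed.

Definition rmul (k : word) (s : nform) : nform := (s.1, canon (s.2 ++ k)).

Lemma act_rmul x k s : act x (rmul k s) = rmul k (act x s).
Proof.
have act_base_rmul h ss g :
    act_base h ss (canon (g ++ k)) = rmul k (act_base h ss g).
  elim: ss h => [|[t kk] ss IH] h; rewrite /rmul /=; last by rewrite IH.
  by congr (_, _); apply: canon_eq; rewrite !canon_weq catA.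
rewrite /act /rmul; case: eqP => _; last by rewrite act_base_rmul.
rewrite /act_stable /=; case: s.1 => [|[t k'] ss] //=.
by case: eqP => _ //; case: Z.eqb.
Qed.

Lemma act_word_rmul w k s : act_word w (rmul k s) = rmul k (act_word w s).
Proof. by elim: w => [|x w IH] //=; rewrite IH act_rmul. Qed.

Lemma centralize_gen_del p m : p != u -> ~~ adj u p ->
  weq (m ++ [:: (p, false)]) ((p, false) :: m) -> in_special del_u m.
Proof.
move=> pu up Hm; set s0 : nform := ([::], canon [::]).
have Hs0 : reduced s0 by split; [apply: canonK | rewrite /= canon_weq; apply: in_special_nil |].
have Hred := act_word_reduced m Hs0.
have Hact := act_word_weq Hm Hs0.
rewrite act_word_cat /= /act /= (negbTE pu) in Hact.
have E : (([::], canon ((p, false) :: canon [::])) : nform) = rmul [:: (p, false)] s0.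
  by rewrite /rmul /=; congr (_, _); apply: canon_eq; rewrite !canon_weq.
rewrite E act_word_rmul in Hact.
have := eval_act_word m s0.
case: (act_word m s0) Hact Hred => [[|[t k] ss] g] Hact Hred.
  by rewrite /eval_nform /= !canon_weq cats0 => <-; case: Hred.
(* m p and p m have the same normal form, so its first syllable t satisfies
   coset_rep (p t) = t, i.e. p t = t l with l in A_{lk u}, which the exponent
   sum of p forbids. *)
case: Hact => Et _ _ _.
have [l Hl Hw] := coset_repP ([:: (p, false)] ++ t); rewrite -Et in Hw.
have := expsum_weq p Hw; rewrite !expsum_cat (@expsum_special p link_u l) //=.
  by rewrite eqxx; lia.
by rewrite inE.
Qed.

End Britton.

Lemma in_special_all_del (X : {set V}) (w : word) :
  (forall u, u \notin X -> in_special (del_u u) w) -> in_special X w.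
Proof.
move=> Hw; have -> : X = \bigcap_(u in ~: X) del_u u.
  apply/setP => v; apply/idP/bigcapP => [vX u|Hv].
    by rewrite !inE; apply: contraNneq => <-.
  by apply: contraT => vX; have := Hv v; rewrite !inE eqxx vX => /(_ isT).
elim/big_rec: _ => [|u Y uX HY]; last by apply: in_specialI => //; apply: Hw; rewrite -in_setC.
by exists w; split=> //; apply/allP => x; rewrite inE.
Qed.

Lemma centralizer_special_star (P : {set V}) (n : word) :
  (forall p, p \in P -> weq (n ++ [:: (p, false)]) ((p, false) :: n)) ->
  in_special (st P) n.
Proof.
move=> Hn; apply: in_special_all_del => u; rewrite !inE negb_or => /andP[uP].
rewrite negb_forall => /existsP[p]; rewrite negb_imply => /andP[pP up].
apply: (@centralize_gen_del u p); rewrite 1?adj_sym ?Hn //.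
by apply: contraNneq uP => <-.
Qed.

Definition img (g : V -> word) (x : letter V) : word :=
  if x.2 then winv (g x.1) else g x.1.

Lemma ext_cons g x (w : word) : ext g (x :: w) = img g x ++ ext g w.
Proof. by []. Qed.

Lemma ext_cat g (a b : word) : ext g (a ++ b) = ext g a ++ ext g b.
Proof. by rewrite /ext map_cat flatten_cat. Qed.

Lemma img_inv g x : img g (inv_letter x) = winv (img g x).
Proof. by rewrite /img /=; case: x.2; rewrite ?winvK. Qed.

Lemma ext_winv g (a : word) : ext g (winv a) = winv (ext g a).
Proof.
elim: a => [|x a IH] //.
by rewrite winv_cons ext_cat IH ext_cons /= cats0 winv_cat img_inv.
Qed.

Lemma ext_weq g (a b : word) : is_endo adj g -> weq a b -> weq (ext g a) (ext g b).
Proof.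
move=> Hg; elim=> {a b} [w|? ? _ H|? ? ? _ H1 _ H2|a b x|a b x y Hxy].
- by [].
- by symmetry.
- by etransitivity; eauto.
- by rewrite !ext_cat !ext_cons img_inv weq_KVcat.
- rewrite !ext_cat !ext_cons; apply: weq_catl; rewrite !catA; apply: weq_catr.
  have H := Hg _ _ Hxy; rewrite /img; case: x.2; case: y.2.
  + by rewrite -!winv_cat H.
  + exact: weq_comm_inv.
  + by symmetry; apply: weq_comm_inv; symmetry.
  + exact: H.
Qed.

Lemma ext_comp g h (w : word) : ext g (ext h w) = ext (fun v => ext g (h v)) w.
Proof.
elim: w => [|x w IH] //; rewrite ext_cons ext_cat IH ext_cons /img.
by case: x.2; rewrite ?ext_winv.
Qed.

Lemma ext_weq_fun g1 g2 (w : word) :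
  (forall v, weq (g1 v) (g2 v)) -> weq (ext g1 w) (ext g2 w).
Proof.
by move=> H; elim: w => [|x w IH] //; rewrite !ext_cons IH /img; case: x.2; rewrite H.
Qed.

Lemma ext_gen (w : word) : ext (@gen V) w = w.
Proof. by elim: w => [|[v b] w IH] //; rewrite ext_cons IH /img /=; case: b. Qed.

Lemma is_auto_inverse g : is_auto adj g ->
  exists h, [/\ is_endo adj g, is_endo adj h,
    forall w, weq (ext g (ext h w)) w & forall w, weq (ext h (ext g w)) w].
Proof.
case=> Hg [h [Hh Hgh]]; exists h; split => // w; rewrite ext_comp -{2}(ext_gen w);
  by apply: ext_weq_fun => v; case: (Hgh v).
Qed.

(** * Conjugating special subgroups *)

(* conjw c w is c^-1 w c, so conj_into X g c says c^-1 g(A_X) c <= A_X. *)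
Definition conj_into (X : {set V}) (g : V -> word) (c : word) : Prop :=
  forall w, in_special X w -> in_special X (conjw c (ext g w)).

Lemma centralizer_retract (X P : {set V}) (x : word) : P \subset X ->
  (forall q, in_special P q -> in_special X (x ++ q ++ winv x)) ->
  forall q, in_special P q ->
  weq ((winv (retract X x) ++ x) ++ q) (q ++ winv (retract X x) ++ x).
Proof.
move=> sPX Hx q Hq; set r := retract X x.
have E : weq (x ++ q ++ winv x) (r ++ q ++ winv r).
  have := Hx q Hq; rewrite in_specialE => ->.
  by rewrite retract_conj //; apply: in_special_sub Hq.
transitivity ((winv r ++ (x ++ q ++ winv x) ++ r) ++ winv r ++ x); first by group_simpl.
by rewrite E; group_simpl.
Qed.

Lemma conj_special_inv (Q : {set V}) (t : word) :
  (forall a, in_special Q a -> in_special Q (conjw t a)) ->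
  forall a, in_special Q a -> in_special Q (t ++ a ++ winv t).
Proof.
move=> Ht a Ha; set r := retract Q (winv t).
have Cm := @centralizer_retract Q Q (winv t) (subxx Q).
set m := winv r ++ winv t in Cm.
have {}Cm q : in_special Q q -> weq (m ++ q) (q ++ m).
  by apply: Cm => q' /Ht; rewrite winvK.
have Hz : in_special Q (winv r ++ a ++ r).
  by apply: in_special_conj => //; apply: in_special_retract.
have -> : weq (t ++ a ++ winv t) (winv m ++ (winv r ++ a ++ r) ++ m).
  by rewrite /m; group_simpl.
by rewrite -(Cm _ Hz) weq_Kcat.
Qed.

Lemma conj_into_star (X : {set V}) g c n e :
  conj_into X g c -> in_special (st X) n -> weq e (c ++ n) -> conj_into X g e.
Proof.
move=> Hc Hn He w Hw; have En := star_decomp Hn.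
set nX := retract X n; set nL := retract (lk X) n.
have Hz : in_special X (winv nX ++ conjw c (ext g w) ++ nX).
  by apply: in_special_conj; [apply: in_special_retract | apply: Hc].
have -> : weq (conjw e (ext g w)) (winv nL ++ (winv nX ++ conjw c (ext g w) ++ nX) ++ nL).
  by rewrite /conjw He En; group_simpl.
by rewrite (in_special_link_comm Hz (in_special_retract _ n)) weq_Kcat.
Qed.

Lemma conj_into_setI g (D S : {set V}) c d :
  conj_into D g c -> conj_into S g d ->
  conj_into (D :&: S) g (c ++ retract D (winv c ++ d)).
Proof.
move=> HD HS w Hw; set x := winv c ++ d; set y := retract D x.
have Hq : in_special D (conjw c (ext g w)) by apply/HD/(in_special_sub (subsetIl D S)).
have Hs : in_special S (conjw d (ext g w)) by apply/HS/(in_special_sub (subsetIr D S)).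
set q := conjw c (ext g w) in Hq *; set s := conjw d (ext g w) in Hs.
have Eq : weq q (x ++ s ++ winv x) by rewrite /q /s /x /conjw; group_simpl.
have Ry : retract D (x ++ s ++ winv x) = y ++ retract D s ++ winv y.
  by rewrite retract_cat [retract D (s ++ _)]retract_cat retract_winv.
have -> : weq (conjw (c ++ y) (ext g w)) (retract D s).
  transitivity (winv y ++ q ++ y); first by rewrite /q /conjw; group_simpl.
  by rewrite in_specialE in Hq; rewrite Hq Eq Ry; group_simpl.
by rewrite in_specialE in Hs; rewrite Hs retractI; apply: in_special_retract.
Qed.

Lemma conj_into_setU g (D S : {set V}) e : is_endo adj g ->
  conj_into D g e -> conj_into S g e -> conj_into (D :|: S) g e.
Proof.
move=> Hg HD HS w; rewrite in_specialE => Hw.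
have -> : weq (conjw e (ext g w)) (conjw e (ext g (retract (D :|: S) w))).
  by rewrite /conjw (ext_weq Hg Hw).
elim: (retract _ w) (all_retract (D :|: S) w) => [|x w' IH] /=.
  by rewrite /conjw /= weq_catVw => _; apply: in_special_nil.
move=> /andP[Hx /IH Hw'].
have -> : weq (conjw e (ext g (x :: w'))) (conjw e (ext g [:: x]) ++ conjw e (ext g w')).
  by rewrite /conjw !ext_cons /= cats0; group_simpl.
apply: in_special_cat => //; move: Hx; rewrite in_setU => /orP[] Hx.
  by apply: (in_special_sub (subsetUl D S)); apply/HD/in_special_letter.
by apply: (in_special_sub (subsetUr D S)); apply/HS/in_special_letter.
Qed.

Lemma exists_conj_into_setU g (D S : {set V}) c d a : is_endo adj g ->
  lk (D :&: S) \subset st D -> conj_into D g c -> conj_into S g d ->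
  (forall q, in_special (D :&: S) q ->
     exists p, in_special (D :&: S) p /\ weq (conjw a (ext g p)) q) ->
  exists e, conj_into (D :|: S) g e.
Proof.
move=> Hg Hlk HD HS Honto.
have conj_sub (X : {set V}) b : D :&: S \subset X -> conj_into X g b -> forall q,
    in_special (D :&: S) q -> in_special X ((winv b ++ a) ++ q ++ winv (winv b ++ a)).
  move=> sX Hb q Hq; have [p [Hp Ep]] := Honto q Hq.
  have -> : weq ((winv b ++ a) ++ q ++ winv (winv b ++ a)) (conjw b (ext g p)).
    by rewrite -Ep /conjw; group_simpl.
  by apply: Hb; apply: in_special_sub Hp.
set x := winv c ++ a; set y := winv d ++ a.
have C1 := centralizer_retract (subsetIl D S) (conj_sub D c (subsetIl D S) HD).
have C2 := centralizer_retract (subsetIr D S) (conj_sub S d (subsetIr D S) HS).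
set m1 := winv (retract D x) ++ x in C1; set m2 := winv (retract S y) ++ y in C2.
set n := m1 ++ winv m2.
have Hn : in_special (st D) n.
  apply: (in_special_sub _ (@centralizer_special_star (D :&: S) _ _)) => [|p Hp].
    by rewrite /Defs.st subUset Hlk andbT (subset_trans (subsetIl D S) (subsetUl _ _)).
  have Hq := in_special_letter (x := (p, false)) Hp.
  by rewrite /n -catA (weq_comm_inv (C2 _ Hq)) catA (C1 _ Hq) -catA.
exists (c ++ retract D x ++ n); apply: conj_into_setU => //.
  apply: (conj_into_star HD _ (weq_refl _ _)); apply: in_special_cat => //.
  by apply: in_special_sub (in_special_retract _ _); apply: subsetUl.
apply: (conj_into_star HS (n := retract S y)).
  by apply: in_special_sub (in_special_retract _ _); apply: subsetUl.
by rewrite /n /m1 /m2 /x /y; group_simpl.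
Qed.

Section Inverse.
Variables g h : V -> word.
Hypothesis endo_h : is_endo adj h.
Hypothesis ext_gK : forall w, weq (ext h (ext g w)) w.
Hypothesis ext_hK : forall w, weq (ext g (ext h w)) w.

Lemma conj_into_inverse (X : {set V}) : maps_to_conj adj g X -> exists c, conj_into X h c.
Proof.
case=> c [_ Honto]; exists (winv (ext h c)) => w Hw.
have [w0 [Hw0 Ew]] := Honto w Hw.
have -> : weq (conjw (winv (ext h c)) (ext h w)) (ext h (c ++ w ++ winv c)).
  by rewrite /conjw winvK !ext_cat ext_winv.
have E : weq (c ++ w ++ winv c) (ext g w0) by rewrite -Ew /conjw; group_simpl.
by rewrite (ext_weq endo_h E) ext_gK.
Qed.

Lemma maps_to_conj_inverse (Q : {set V}) :
  (exists e, conj_into Q g e) -> (exists e, conj_into Q h e) -> maps_to_conj adj g Q.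
Proof.
case=> e He [e' He']; exists e; split => // v Hv.
set t := ext g e' ++ e.
have conj_t w : weq (conjw e (ext g (conjw e' (ext h w)))) (conjw t w).
  by rewrite /conjw !ext_cat ext_winv ext_hK /t; group_simpl.
have Ht a : in_special Q a -> in_special Q (conjw t a) by move/He'/He; rewrite conj_t.
exists (conjw e' (ext h (t ++ v ++ winv t))); split; first exact/He'/conj_special_inv.
by rewrite conj_t /conjw; group_simpl.
Qed.

End Inverse.

Lemma auto_maps_to_conj_setI_setU g (D S : {set V}) : is_auto adj g ->
  maps_to_conj adj g D -> maps_to_conj adj g S ->
  maps_to_conj adj g (D :&: S) /\
  (lk (D :&: S) \subset st D -> maps_to_conj adj g (D :|: S)).
Proof.
case/is_auto_inverse=> h [Hg Hh ghK hgK] HD HS.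
have [c' Hc'] := conj_into_inverse Hh hgK HD.
have [d' Hd'] := conj_into_inverse Hh hgK HS.
case: HD => c [Hc _]; case: HS => d [Hd _].
have DS_g : maps_to_conj adj g (D :&: S).
  by apply: (maps_to_conj_inverse ghK); eexists; apply: conj_into_setI; eauto.
have DS_h : maps_to_conj adj h (D :&: S).
  by apply: (maps_to_conj_inverse hgK); eexists; apply: conj_into_setI; eauto.
split=> // Hlk; apply: (maps_to_conj_inverse ghK).
  by case: DS_g => a [_ Honto]; apply: (exists_conj_into_setU Hg Hlk Hc Hd Honto).
by case: DS_h => a [_ Honto]; apply: (exists_conj_into_setU Hh Hlk Hc' Hd' Honto).
Qed.

End RAAG.

Theorem mainTheorem6 (V : finType) (adj : rel V)
  (adj_sym : symmetric adj) (adj_irr : irreflexive adj)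
  (H : Type) (mulH : H -> H -> H) (oneH : H) (invH : H -> H)
  (Hgrp : is_group mulH oneH invH)
  (phi : H -> V -> word V) (Hphi : is_out_hom adj mulH phi)
  (D S : {set V}) :
  invariant_sub adj phi D -> invariant_sub adj phi S ->
  invariant_sub adj phi (D :&: S) /\
  (lk adj (D :&: S) \subset st adj D -> invariant_sub adj phi (D :|: S)).
Proof.
move=> HD HS; have Hphi_h h := auto_maps_to_conj_setI_setU adj_sym adj_irr
  (proj1 Hphi h) (HD h) (HS h).
by split=> [h | Hlk h]; [case: (Hphi_h h) | case: (Hphi_h h) => _ /(_ Hlk)].
Qed.
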